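(* Let $G$ be a Tanner graph representing a binary code $\mathcal{C}$. If either (i) $G$ is a tree, or (ii) between any two variable nodes of $G$ there is at least one path traversing only check nodes of degree two, then $G$ has either exactly one or zero irreducible lift-realizable nc-pseudocodewords.
   Context: A Tanner graph $G$ is a finite bipartite graph with variable nodes $v_1,\dots,v_n$ and check nodes; its code $\mathcal{C}$ consists of all $x\in\{0,1\}^n$ with every check node having an even number of neighbours $v_i$ with $x_i=1$. A degree-$\ell$ lift replaces each node by $\ell$ copies and each edge by a perfect matching between copy-sets; a lift-realizable pseudocodeword $p\in\mathbb{Z}_{\ge0}^n$ is obtained from a codeword of the code of a finite lift by letting $p_i$ be the number of copies of $v_i$ assigned 1. It is an nc-pseudocodeword if it is not a codeword of $\mathcal{C}$, and irreducible if it cannot be written as a sum of two or more nonzero codewords or pseudocodewords. *)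

From mathcomp Require Import all_boot all_order perm.
Set Implicit Arguments. Unset Strict Implicit. Unset Printing Implicit Defensive.

(* A Tanner graph with n variable nodes ('I_n) and m check nodes ('I_m);
   adj c v  <=>  check node c is adjacent to variable node v. *)
Definition tanner (n m : nat) := 'I_m -> 'I_n -> bool.

Section Tanner.
Variables (n m : nat) (adj : tanner n m).

Definition in_code (x : 'I_n -> bool) : Prop :=
  forall c : 'I_m, ~~ odd #|[set v : 'I_n | adj c v && x v]|.

(* Degree-l lift given by a perfect matching (permutation) pi c v of the
   copy sets for each edge (c,v): copy (v,a) is joined to copy (c, pi c v a). *)
Definition lift_codeword (l : nat) (pi : 'I_m -> 'I_n -> {perm 'I_l})
  (x : 'I_n -> 'I_l -> bool) : Prop :=
  forall (c : 'I_m) (b : 'I_l),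
    ~~ odd #|[set va : 'I_n * 'I_l |
                [&& adj c va.1, pi c va.1 va.2 == b & x va.1 va.2]]|.

Definition lift_realizable (p : {ffun 'I_n -> nat}) : Prop :=
  exists (l : nat) (pi : 'I_m -> 'I_n -> {perm 'I_l}) (x : 'I_n -> 'I_l -> bool),
    0 < l /\ lift_codeword pi x /\
    forall v : 'I_n, p v = #|[set a : 'I_l | x v a]|.

Definition is_codeword (p : {ffun 'I_n -> nat}) : Prop :=
  (forall v, p v <= 1) /\ in_code (fun v => p v == 1).

Definition nc_pseudocodeword (p : {ffun 'I_n -> nat}) : Prop :=
  lift_realizable p /\ ~ is_codeword p.

(* p is a sum of two or more nonzero codewords / lift-realizable
   pseudocodewords (codewords are themselves lift-realizable with l = 1,
   but we allow both explicitly). *)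
Definition reducible (p : {ffun 'I_n -> nat}) : Prop :=
  exists s : seq {ffun 'I_n -> nat},
    1 < size s /\
    (forall q, q \in s -> q != [ffun => 0] /\ (is_codeword q \/ lift_realizable q)) /\
    forall v : 'I_n, p v = \sum_(q <- s) q v.

Definition irreducible_nc_pcw (p : {ffun 'I_n -> nat}) : Prop :=
  nc_pseudocodeword p /\ ~ reducible p.

Definition tanner_rel : rel ('I_n + 'I_m) :=
  fun x y => match x, y with
             | inl v, inr c => adj c v
             | inr c, inl v => adj c v
             | _, _ => false
             end.

Definition is_tree : Prop :=
  (forall x y, connect tanner_rel x y) /\
  ~ (exists s : seq ('I_n + 'I_m), 2 < size s /\ uniq s /\ cycle tanner_rel s).

Definition check_deg (c : 'I_m) : nat := #|[set v : 'I_n | adj c v]|.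

Definition deg2_step (v w : 'I_n) : bool :=
  [exists c : 'I_m, [&& check_deg c == 2, adj c v & adj c w]].

Definition deg2_connected : Prop :=
  forall v w : 'I_n, v != w ->
    exists s : seq 'I_n, [/\ path deg2_step v s, uniq (v :: s) & last v s = w].

End Tanner.

From mathcomp Require Import all_boot all_order perm fingroup.
Set Implicit Arguments. Unset Strict Implicit. Unset Printing Implicit Defensive.

(* (i) On a forest the edge permutations of any lift can be untwisted by
   relabelling the copies at every node, so a lift codeword is just l codewords
   of G side by side: every lift-realizable pseudocodeword is a sum of codewords
   and none is an irreducible nc-pseudocodeword.
   (ii) A check of degree two forces its two neighbours to carry equal weights in
   every lift codeword, so under the path hypothesis every lift-realizable
   pseudocodeword is constant, p = k 1. If all checks have even degree, 1 is a
   codeword and k 1 is reducible for k > 1. Otherwise an odd-degree check forces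
   k to be even, a check of degree one forces k = 0, and if there is none then
   2 1 is lift-realizable, so 2 1 is the only candidate. *)

Lemma card_set_andE (T : finType) (P Q : pred T) :
  #|[set t | P t && Q t]| = \sum_(t | P t) Q t.
Proof.
rewrite -sum1_card big_mkcond [RHS]big_mkcond /=.
by apply: eq_bigr => t _; rewrite inE; case: (P t); case: (Q t).
Qed.

Lemma card_setE (T : finType) (P : pred T) : #|[set t | P t]| = \sum_t P t.
Proof. by rewrite -(card_set_andE predT). Qed.

Lemma next_neq (T : eqType) (s : seq T) x :
  uniq s -> 1 < size s -> x \in s -> next s x != x.
Proof.
move=> Us s_gt1 /rot_to[i q Es]; rewrite -(next_rot i Us) Es.
have : uniq (x :: q) by rewrite -Es rot_uniq.
have : 1 < size (x :: q) by rewrite -Es size_rot.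
case: q {Es} => [|y q] //= _ /andP[]; rewrite inE negb_or eqxx eq_sym.
by case/andP.
Qed.

Section Tanner.
Variables (n m : nat) (adj : tanner n m).

Lemma in_codeE (x : 'I_n -> bool) :
  in_code adj x <-> forall c, ~~ odd (\sum_(v | adj c v) x v).
Proof. by split=> x_cw c; move: (x_cw c); rewrite /= card_set_andE. Qed.

Lemma is_codeword_bool (x : 'I_n -> bool) :
  in_code adj x -> is_codeword adj [ffun v => nat_of_bool (x v)].
Proof.
move=> /in_codeE x_cw; split=> [v|]; first by rewrite ffunE leq_b1.
by apply/in_codeE => c; under eq_bigr => v _ do rewrite ffunE eqb1; exact: x_cw.
Qed.

Lemma is_codeword0 : is_codeword adj [ffun => 0].
Proof. by apply: (@is_codeword_bool (fun=> false)); apply/in_codeE => c; rewrite big1. Qed.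

Lemma is_codeword1 : (forall c, ~~ odd (check_deg adj c)) -> is_codeword adj [ffun => 1].
Proof.
move=> even_deg; apply: (@is_codeword_bool (fun=> true)); apply/in_codeE => c.
by rewrite sum_nat_cond_const /= muln1; exact: even_deg.
Qed.

Lemma reducible_scale (v0 : 'I_n) (r k : nat) : 0 < r -> 1 < k ->
  is_codeword adj [ffun => r] \/ lift_realizable adj [ffun => r] ->
  reducible adj [ffun => k * r].
Proof.
move=> r_gt0 k_gt1 r_pcw; exists (nseq k [ffun => r]).
split; first by rewrite size_nseq.
split=> [q /nseqP[-> _]|v]; last by rewrite big_nseq iter_addn_0 !ffunE mulnC.
by split=> //; apply/eqP => /ffunP/(_ v0); rewrite !ffunE => r0; rewrite r0 in r_gt0.
Qed.

Lemma sum_codewords (I : finType) (y : I -> {ffun 'I_n -> nat}) (p : {ffun 'I_n -> nat}) :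
  (forall i, is_codeword adj (y i)) -> (forall v, p v = \sum_i y i v) ->
  is_codeword adj p \/ reducible adj p.
Proof.
move=> y_cw p_sum.
have [s [p_s s_cw]] : exists s : seq {ffun 'I_n -> nat},
    (forall v, p v = \sum_(q <- s) q v) /\
    forall q, q \in s -> q != [ffun => 0] /\ is_codeword adj q.
  exists [seq q <- map y (index_enum I) | q != [ffun => 0]]; split=> [v|q].
    rewrite p_sum big_filter big_map [LHS](bigID (fun i => y i != [ffun => 0])) /=.
    by rewrite [X in _ + X]big1 ?addn0 // => i /negPn/eqP->; rewrite ffunE.
  by rewrite mem_filter => /andP[-> /mapP[i _ ->]]; split; last exact: y_cw.
case: s p_s s_cw => [|q [|q' s]] p_s s_cw.
- left; rewrite (_ : p = [ffun => 0]); first exact: is_codeword0.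
  by apply/ffunP => v; rewrite p_s big_nil ffunE.
- left; rewrite (_ : p = q); first exact: (s_cw q (mem_head _ _)).2.
  by apply/ffunP => v; rewrite p_s big_seq1.
- right; exists [:: q, q' & s]; split=> //; split=> // r /s_cw[r_nz r_cw].
  by split=> //; left.
Qed.

Lemma lift_codewordE l (pi : 'I_m -> 'I_n -> {perm 'I_l}) x :
  lift_codeword adj pi x <->
  forall c b, ~~ odd (\sum_(v | adj c v) x v ((pi c v)^-1%g b)).
Proof.
suff card_copy c b : #|[set va : 'I_n * 'I_l |
    [&& adj c va.1, pi c va.1 va.2 == b & x va.1 va.2]]|
  = #|[set v | adj c v && x v ((pi c v)^-1%g b)]|.
  by split=> x_cw c b; move: (x_cw c b); rewrite card_copy card_set_andE.
rewrite -(card_imset _ (f := fun v => (v, (pi c v)^-1%g b))); last first.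
  by move=> v w [].
apply: eq_card => -[v a]; rewrite !inE /=; apply/and3P/imsetP => /=.
- case=> cv /eqP <- xva; exists v; first by rewrite inE cv permK.
  by rewrite permK.
- case=> w; rewrite inE => /andP[cw xw] [-> ->].
  by rewrite permKV.
Qed.

Lemma sum_nbrsE c (F : 'I_n -> nat) :
  \sum_(v | adj c v) F v = \sum_(v in [set v | adj c v]) F v.
Proof. by apply: eq_bigl => v; rewrite inE. Qed.

Section LiftCodeword.
Variables (l : nat) (pi : 'I_m -> 'I_n -> {perm 'I_l}) (x : 'I_n -> 'I_l -> bool).
Hypothesis x_cw : lift_codeword adj pi x.

Lemma lift_weightE c v : #|[set a | x v a]| = \sum_b x v ((pi c v)^-1%g b).
Proof. by rewrite card_setE (reindex_inj (@perm_inj _ (pi c v)^-1%g)). Qed.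

Lemma lift_weight_check_sum_even c : ~~ odd (\sum_(v | adj c v) #|[set a | x v a]|).
Proof.
under eq_bigr => v _ do rewrite (lift_weightE c).
rewrite exchange_big /=; apply: (big_ind (fun k => ~~ odd k)) => //.
- by move=> i j i_ev j_ev; rewrite oddD (negbTE i_ev) (negbTE j_ev).
- move=> b _; exact: (lift_codewordE pi x).1 x_cw c b.
Qed.

Lemma lift_weight_deg1 c v : check_deg adj c = 1 -> adj c v -> #|[set a | x v a]| = 0.
Proof.
move=> deg1 cv; have Nc : [set w | adj c w] = [set v].
  by apply/eqP; rewrite eq_sym eqEcard cards1 -/(check_deg adj c) deg1 sub1set inE cv.
rewrite (lift_weightE c); apply: big1 => b _.
have := (lift_codewordE pi x).1 x_cw c b.
by rewrite sum_nbrsE Nc big_set1; case: (x v _).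
Qed.

Lemma lift_weight_deg2 c v w : check_deg adj c = 2 -> adj c v -> adj c w ->
  #|[set a | x v a]| = #|[set a | x w a]|.
Proof.
move=> deg2 cv cw; have [->//|vw] := eqVneq v w.
have Nc : [set u | adj c u] = [set v; w].
  apply/eqP; rewrite eq_sym eqEcard cards2 vw -/(check_deg adj c) deg2 andbT.
  by apply/subsetP => u; rewrite !inE => /orP[]/eqP->.
rewrite !(lift_weightE c); apply: eq_bigr => b _.
have := (lift_codewordE pi x).1 x_cw c b.
rewrite sum_nbrsE Nc big_setU1 ?inE // big_set1.
by case: (x v _); case: (x w _).
Qed.

End LiftCodeword.

Lemma lift_realizable_check_sum_even p c :
  lift_realizable adj p -> ~~ odd (\sum_(v | adj c v) p v).
Proof.
case=> l [pi [x [_ [x_cw p_wt]]]].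
by under eq_bigr => v _ do rewrite p_wt; exact: lift_weight_check_sum_even x_cw c.
Qed.

Lemma lift_realizable_deg1 p c v :
  lift_realizable adj p -> check_deg adj c = 1 -> adj c v -> p v = 0.
Proof. by case=> l [pi [x [_ [x_cw ->]]]] deg1 cv; exact (lift_weight_deg1 x_cw deg1 cv). Qed.

Lemma lift_realizable_const p : deg2_connected adj -> lift_realizable adj p ->
  forall v w, p v = p w.
Proof.
move=> conn [l [pi [x [_ [x_cw p_wt]]]]] v w; rewrite !p_wt.
have [->//|vw] := eqVneq v w.
have [s [vs_path _ <-]] := conn v w vw.
elim: s v {vw} vs_path => [//|u s IHs] v /= /andP[/existsP[c /and3P[/eqP deg2 cv cu]]].
by move=> /IHs <-; exact (lift_weight_deg2 x_cw deg2 cv cu).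
Qed.

Definition nbrs c : seq 'I_n := enum [set v | adj c v].

Definition copy0 : 'I_(2 + n) := lshift n ord0.
Definition copy1 : 'I_(2 + n) := lshift n ord_max.
Definition slot (v : 'I_n) : 'I_(2 + n) := rshift 2 v.

(* The two copies of v carrying a 1 are sent, along the edge (c, v), to the
   copies of c indexed by v and by the cyclic successor of v among the
   neighbours of c; every copy of c then meets exactly zero or two 1s. *)
Definition two_perm c v : {perm 'I_(2 + n)} :=
  (tperm copy0 (slot v) * tperm copy1 (slot (next (nbrs c) v)))%g.

Definition two_word (v : 'I_n) (a : 'I_(2 + n)) : bool := a < 2.

Lemma mem_nbrs c v : (v \in nbrs c) = adj c v.
Proof. by rewrite mem_enum inE. Qed.

Lemma size_nbrs c : size (nbrs c) = check_deg adj c.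
Proof. by rewrite /check_deg cardE. Qed.

Lemma two_word_card v : #|[set a | two_word v a]| = 2.
Proof.
rewrite (_ : [set a | _] = [set copy0; copy1]) ?cards2 //.
by apply/setP => -[[|[|a]] a_lt]; rewrite !inE /two_word.
Qed.

Lemma two_wordV (s : {perm 'I_(2 + n)}) v b :
  two_word v (s^-1%g b) = (b == s copy0) || (b == s copy1).
Proof.
rewrite -!(can2_eq (permKV s) (permK s)) /two_word.
by case: (s^-1%g b) => -[|[|a]] a_lt.
Qed.

Lemma two_perm_copies c v : 1 < size (nbrs c) -> adj c v ->
  two_perm c v copy0 = slot v /\ two_perm c v copy1 = slot (next (nbrs c) v).
Proof.
move=> deg_gt1 cv.
have copy1_slot w : copy1 != slot w by rewrite -val_eqE.
have next_v : slot (next (nbrs c) v) != slot v.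
  by rewrite (inj_eq (@rshift_inj _ _)) next_neq ?enum_uniq ?mem_nbrs.
rewrite !permM tpermL (tpermD (copy1_slot v) next_v).
by rewrite (@tpermD _ copy0) ?tpermL // eq_sym.
Qed.

Lemma nbrs_size_gt1 c w : check_deg adj c != 1 -> adj c w -> 1 < size (nbrs c).
Proof.
move=> deg_neq1 cw; rewrite ltn_neqAle eq_sym {1}size_nbrs deg_neq1 -has_predT.
by apply/hasP; exists w; rewrite ?mem_nbrs.
Qed.

Lemma two_word_hit c w b : check_deg adj c != 1 -> adj c w ->
  two_word w ((two_perm c w)^-1%g b) = (b == slot w) || (b == slot (next (nbrs c) w)).
Proof.
move=> deg_neq1 cw; rewrite two_wordV.
by have [-> ->] := two_perm_copies (nbrs_size_gt1 deg_neq1 cw) cw.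
Qed.

Lemma card_nbrs_prev_even c u : check_deg adj c != 1 ->
  ~~ odd #|[set w | adj c w && ((w == u) || (w == prev (nbrs c) u))]|.
Proof.
move=> deg_neq1; have s_uniq : uniq (nbrs c) by exact: enum_uniq.
have [cu | ncu] := boolP (adj c u); last first.
  rewrite (_ : prev _ u = u); last by rewrite prev_nth mem_nbrs (negbTE ncu).
  rewrite (_ : [set w | _] = set0) ?cards0 //; apply/setP => w.
  by rewrite !inE orbb; case: eqP => [->|]; rewrite ?(negbTE ncu) ?andbF.
have prev_u : prev (nbrs c) u \in nbrs c by rewrite mem_prev mem_nbrs.
rewrite (_ : [set w | _] = [set u; prev (nbrs c) u]) ?cards2.
  rewrite -{1}(next_prev s_uniq u) next_neq //; exact: nbrs_size_gt1 cu.
apply/setP => w; rewrite !inE; case: eqP => [->|_]; first by rewrite cu.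
by case: eqP => [->|] /=; rewrite ?andbT ?andbF // -mem_nbrs.
Qed.

Lemma two_lift_codeword :
  (forall c, check_deg adj c != 1) -> lift_codeword adj two_perm two_word.
Proof.
move=> no_deg1; apply/lift_codewordE => c b; rewrite -card_set_andE.
have s_uniq : uniq (nbrs c) by exact: enum_uniq.
have -> : [set w | adj c w && two_word w ((two_perm c w)^-1%g b)] =
          [set w | adj c w && ((b == slot w) || (b == slot (next (nbrs c) w)))].
  by apply/setP => w; rewrite !inE; apply/andb_id2l/two_word_hit.
case: (splitP b) => [j bE | u bE].
  rewrite (_ : [set w | _] = set0) ?cards0 //; apply/setP => w.
  have j_lt k : j < 2 + k by rewrite ltn_addr.
  by rewrite !inE -!val_eqE /= bE !ltn_eqF ?j_lt ?andbF.
have slotE w : (b == slot w) = (w == u).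
  by rewrite -val_eqE /= bE eqn_add2l val_eqE eq_sym.
under eq_finset => w do rewrite !slotE (can2_eq (prev_next s_uniq) (next_prev s_uniq)).
exact: card_nbrs_prev_even.
Qed.

Lemma two_lift_realizable :
  (forall c, check_deg adj c != 1) -> lift_realizable adj [ffun => 2].
Proof.
move=> no_deg1; exists (2 + n), two_perm, two_word.
split=> //; split=> [|v]; first exact: two_lift_codeword.
by rewrite ffunE two_word_card.
Qed.

End Tanner.

Section Untwist.
Variables (n m : nat).

(* The second half of [is_tree]; unlike connectedness it survives edge deletion. *)
Definition acyclic (adj : tanner n m) : Prop :=
  ~ (exists s : seq ('I_n + 'I_m), 2 < size s /\ uniq s /\ path.cycle (tanner_rel adj) s).

Definition del_edge (adj : tanner n m) c v : tanner n m :=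
  fun c' v' => adj c' v' && ((c', v') != (c, v)).

Lemma del_edge_sub adj c v : subrel (tanner_rel (del_edge adj c v)) (tanner_rel adj).
Proof. by move=> [x|x] [y|y] //= /andP[]. Qed.

Lemma acyclic_del_edge adj c v : acyclic adj -> acyclic (del_edge adj c v).
Proof.
move=> acyc [s [s_gt2 [s_uniq s_cycle]]]; apply: acyc; exists s.
by split=> //; split=> //; exact: sub_cycle (@del_edge_sub adj c v) _ s_cycle.
Qed.

Lemma acyclic_del_edge_disconnected adj c v : acyclic adj -> adj c v ->
  ~~ connect (tanner_rel (del_edge adj c v)) (inl v) (inr c).
Proof.
move=> acyc cv; apply/negP => /connectP[p vp_path c_last].
case: (shortenP vp_path) c_last => p' p'_path p'_uniq _ c_last.
apply: acyc; exists (inl v :: p'); split; last split => //.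
  case: p' p'_path {p'_uniq} c_last => [|y [|z p']] //= /andP[vy _] c_last.
  by move: vy; rewrite -c_last /= /del_edge cv eqxx.
rewrite /path.cycle rcons_path (sub_path (@del_edge_sub adj c v) p'_path) -c_last /=.
exact: cv.
Qed.

(* Delete an edge (c, v) and untwist the rest; as c is no longer connected to v,
   composing all labels on the component of v with one fixed permutation
   repairs the deleted edge without breaking the others. *)
Lemma acyclic_untwist l (adj : tanner n m) (pi : 'I_m -> 'I_n -> {perm 'I_l}) :
  acyclic adj -> exists (sg : 'I_n -> {perm 'I_l}) (tau : 'I_m -> {perm 'I_l}),
    forall c v, adj c v -> (sg v * pi c v)%g = tau c.
Proof.
have [k] := ubnP #|[set e : 'I_m * 'I_n | adj e.1 e.2]|.
elim: k adj => // k IHk adj edges_lt acyc.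
case: (pickP (fun e : 'I_m * 'I_n => adj e.1 e.2)) => [[c v] /= cv | no_edge]; last first.
  by exists (fun=> 1%g), (fun=> 1%g) => c v cv; move: (no_edge (c, v)); rewrite /= cv.
set adj' := del_edge adj c v.
have [|sg [tau untw']] := IHk adj' _ (@acyclic_del_edge adj c v acyc).
  rewrite -ltnS; apply: leq_trans edges_lt; rewrite ltnS.
  rewrite [X in _ < X](cardsD1 (c, v)) inE cv add1n ltnS subset_leq_card //.
  by apply/subsetP => -[c' v']; rewrite !inE /adj' /del_edge andbC.
pose K u := connect (tanner_rel adj') (inl v) u.
have Kv : K (inl v) := connect0 _ _.
have Kc : ~~ K (inr c) := acyclic_del_edge_disconnected acyc cv.
have K_edge c' v' : adj' c' v' -> K (inl v') = K (inr c').
  by move=> e'; apply/idP/idP => /connect_trans; apply; apply: connect1.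
have [h h_cv] : exists h : {perm 'I_l}, (h * (sg v * pi c v))%g = tau c.
  by exists (tau c * (sg v * pi c v)^-1)%g; rewrite mulgKV.
exists (fun u => if K (inl u) then h * sg u else sg u)%g.
exists (fun c' => if K (inr c') then h * tau c' else tau c')%g.
move=> c' v' cv'; have [[-> ->]|ne] := eqVneq (c', v') (c, v).
  by rewrite Kv (negbTE Kc) -mulgA.
have e' : adj' c' v' by rewrite /adj' /del_edge cv' ne.
by rewrite (K_edge _ _ e'); case: (K (inr c')); rewrite -?mulgA untw'.
Qed.

End Untwist.

Section Irreducible.
Variables (n m : nat) (adj : tanner n m).

Lemma acyclic_lift_realizable p : acyclic adj -> lift_realizable adj p ->
  is_codeword adj p \/ reducible adj p.
Proof.
move=> acyc [l [pi [x [_ [x_cw p_wt]]]]].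
have [sg [tau untw]] := acyclic_untwist pi acyc.
apply: (@sum_codewords _ _ adj _ (fun j => [ffun v => nat_of_bool (x v (sg v j))])).
  move=> j; apply: is_codeword_bool; apply/in_codeE => c.
  have := (lift_codewordE adj pi x).1 x_cw c (tau c j).
  by congr (~~ odd _); apply: eq_bigr => w cw; rewrite -(untw c w cw) permM permK.
move=> v; rewrite p_wt card_setE (reindex_inj (@perm_inj _ (sg v))).
by apply: eq_bigr => j _; rewrite ffunE.
Qed.

Lemma acyclic_no_irreducible p : acyclic adj -> ~ irreducible_nc_pcw adj p.
Proof. by move=> acyc [[lr nc] irr]; case: (acyclic_lift_realizable acyc lr). Qed.

Lemma deg2_connected_irreducible p : deg2_connected adj -> irreducible_nc_pcw adj p ->
  forall v, p v = 2.
Proof.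
move=> conn [[lr nc] irr] v0; set k := p v0.
have pE : p = [ffun => k].
  by apply/ffunP => v; rewrite ffunE (lift_realizable_const conn lr v v0).
have k_gt0 : 0 < k.
  by rewrite lt0n; apply/eqP => k0; apply: nc; rewrite pE k0; exact: is_codeword0.
have trivial_multiple r d : 0 < r -> k = d * r ->
    is_codeword adj [ffun => r] \/ lift_realizable adj [ffun => r] -> d = 1.
  move=> r_gt0 kE r_pcw; apply/eqP; rewrite eqn_leq -(ltn_pmul2r r_gt0) -kE k_gt0 andbT.
  rewrite leqNgt; apply/negP => d_gt1; apply: irr.
  by rewrite pE kE; exact (reducible_scale v0 r_gt0 d_gt1 r_pcw).
case: (pickP (fun c => odd (check_deg adj c))) => [c odd_c | even_deg]; last first.
  have ones_cw : is_codeword adj [ffun => 1] by apply: is_codeword1 => c; rewrite even_deg.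
  have k1 : k = 1 by apply: (trivial_multiple 1 k); rewrite ?muln1 //; left.
  by exfalso; apply: nc; rewrite pE k1.
have k_even : ~~ odd k.
  have := lift_realizable_check_sum_even c lr.
  by rewrite (eq_bigr (fun=> k)) ?sum_nat_cond_const ?oddM ?odd_c // => v _; rewrite pE ffunE.
have no_deg1 c' : check_deg adj c' != 1.
  apply/eqP => deg1; have /card_gt0P[u] : 0 < check_deg adj c' by rewrite deg1.
  rewrite inE => c'u; have := lift_realizable_deg1 lr deg1 c'u.
  by rewrite pE ffunE => k0; rewrite k0 in k_gt0.
have kE : k = k./2 * 2 by rewrite -[LHS]odd_double_half (negbTE k_even) muln2.
have half_k : k./2 = 1 by apply: (trivial_multiple 2) => //; right; exact: two_lift_realizable.
by rewrite kE half_k.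
Qed.

End Irreducible.

Theorem claim2 (n m : nat) (adj : tanner n m) :
  is_tree adj \/ deg2_connected adj ->
  forall p q : {ffun 'I_n -> nat},
    irreducible_nc_pcw adj p -> irreducible_nc_pcw adj q -> p = q.
Proof.
move=> [[_ acyc] | conn] p q p_irr q_irr.
  by case: (acyclic_no_irreducible acyc p_irr).
apply/ffunP => v.
by rewrite (deg2_connected_irreducible conn p_irr) (deg2_connected_irreducible conn q_irr).
Qed.
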